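(* Let $N\in\mathbb{N}$ with $N>1$ and $0\le\mu<L<\infty$, and let $(\tau,\{\beta_{i,j}\},\{\lambda_{i,j}\})$ be an optimal solution of problem (Minimax-R) described in the context. Then: (i) for $0\le i<N-1$, if $\lambda_{i,i+1}=0$ then $\beta_{i,j}=0$ for all $j$; (ii) if $\lambda_{N-1,\star}=0$ then $\beta_{N-1,j}=0$ for all $j$; (iii) defining $\alpha_{i,j}=0$ if $\beta_{i,j}=0$, and otherwise $\alpha_{i,j}=\beta_{i,j}/\lambda_{i,i+1}$ for $1\le i<N-1$, $\alpha_{N-1,j}=\beta_{N-1,j}/\lambda_{N-1,\star}$, $\alpha_{N,j}=\beta_{N,j}$, the method generating iterates by $w_k-w_\star=(w_0-w_\star)(1-\frac{\mu}{L}\sum_{i=0}^{k-1}\alpha_{k,i})-\sum_{i=0}^{k-1}\frac{\alpha_{k,i}}{L}\nabla\tilde f(w_i)$, $k=1,\dots,N$, with $\tilde f(x)=f(x)-\frac\mu2\|x-w_\star\|^2$, satisfies $\|w_N-w_\star\|^2\le\tau\|w_0-w_\star\|^2$ for any $d\in\mathbb{N}$, $w_0\in\mathbb{R}^d$, $f\in\mathcal{F}_{\mu,L}(\mathbb{R}^d)$ and $w_\star\in\arg\min f$.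
   Context: $\mathcal{F}_{\mu,L}(\mathbb{R}^d)$ denotes the set of proper closed convex functions $f:\mathbb{R}^d\to\mathbb{R}$ such that for all $x,y$: $f(x)\le f(y)+\langle\nabla f(y);x-y\rangle+\frac L2\|x-y\|^2$ and $f(x)\ge f(y)+\langle\nabla f(y);x-y\rangle+\frac\mu2\|x-y\|^2$. Let $\mathbf{w}_0=e_1\in\mathbb{R}^{N+1}$, $\mathbf{g}_i=e_{i+2}\in\mathbb{R}^{N+1}$, $\mathbf{f}_i=e_{i+1}\in\mathbb{R}^N$ ($i=0,\dots,N-1$). Problem (Minimax-R): variables $\tau\in\mathbb{R}$; $\lambda_{i,i+1}\ge0$ ($i=0,\dots,N-2$), $\lambda_{\star,i}\ge0$ ($i=0,\dots,N-1$), $\lambda_{N-1,\star}\ge0$; $\beta_{i,j}\in\mathbb{R}$ ($1\le i\le N$, $0\le j\le i-1$). Minimize $\tau$ subject to $\begin{pmatrix}S''&\mathbf{w}_N\\\mathbf{w}_N^\top&1\end{pmatrix}\succeq0$ and $\sum_{i=0}^{N-2}\lambda_{i,i+1}(\mathbf{f}_{i+1}-\mathbf{f}_i)+\sum_{i=0}^{N-1}\lambda_{\star,i}\mathbf{f}_i-\lambda_{N-1,\star}\mathbf{f}_{N-1}=0$, where $\mathbf{w}_N=\mathbf{w}_0(1-\frac{\mu}{L}\sum_{i=0}^{N-1}\beta_{N,i})-\sum_{i=0}^{N-1}\frac{\beta_{N,i}}{L}\mathbf{g}_i$ and, writing $\mathrm{sym}(a,b)=\frac12(ab^\top+ba^\top)$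 and empty sums as $0$, $S''=\frac{1}{2(L-\mu)}\big(\lambda_{N-1,\star}\mathbf{g}_{N-1}\mathbf{g}_{N-1}^\top+\sum_{i=0}^{N-1}\lambda_{\star,i}\mathbf{g}_i\mathbf{g}_i^\top+\sum_{i=0}^{N-2}\lambda_{i,i+1}(\mathbf{g}_i-\mathbf{g}_{i+1})(\mathbf{g}_i-\mathbf{g}_{i+1})^\top\big)-\lambda_{\star,0}\mathrm{sym}(\mathbf{g}_0,\mathbf{w}_0)-\sum_{i=1}^{N-2}\big(\lambda_{i,i+1}-\frac{\mu}{L}\sum_{j=0}^{i-1}\beta_{i,j}\big)\mathrm{sym}(\mathbf{g}_i,\mathbf{w}_0)+\sum_{i=1}^{N-2}\sum_{j=0}^{i-1}\frac{\beta_{i,j}}{L}\mathrm{sym}(\mathbf{g}_i,\mathbf{g}_j)-\big(\lambda_{N-1,\star}-\frac{\mu}{L}\sum_{j=0}^{N-2}\beta_{N-1,j}\big)\mathrm{sym}(\mathbf{g}_{N-1},\mathbf{w}_0)+\sum_{j=0}^{N-2}\frac{\beta_{N-1,j}}{L}\mathrm{sym}(\mathbf{g}_{N-1},\mathbf{g}_j)+\sum_{i=0}^{N-2}\big(\lambda_{i,i+1}-\frac{\mu}{L}\sum_{j=0}^{i-1}\beta_{i,j}\big)\mathrm{sym}(\mathbf{g}_{i+1},\mathbf{w}_0)-\sum_{i=0}^{N-2}\sum_{j=0}^{i-1}\frac{\beta_{i,j}}{L}\mathrm{sym}(\mathbf{g}_{i+1},\mathbf{g}_j)+\tau\mathbf{w}_0\mathbf{w}_0^\top$.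 *)

From HB Require Import structures.
From mathcomp Require Import all_boot all_order all_algebra all_classical all_reals all_analysis.
Set Implicit Arguments. Unset Strict Implicit. Unset Printing Implicit Defensive.
Import Order.TTheory GRing.Theory Num.Theory numFieldTopology.Exports numFieldNormedType.Exports.
Local Open Scope ring_scope.

Section Defs.
Variable R : realType.

(** Standard basis column vector e_{k+1} (0-based index k) of R^n. *)
Definition evec (n k : nat) : 'cV[R]_n := \col_(r < n) ((r : nat) == k)%:R.

Definition symm (n : nat) (a b : 'cV[R]_n) : 'M[R]_n :=
  2^-1 *: (a *m b^T + b *m a^T).

Definition psd (n : nat) (A : 'M[R]_n) : Prop :=
  A^T = A /\ forall x : 'cV[R]_n, 0 <= (x^T *m A *m x) 0 0.

(** Data of (Minimax-R):
    lnext i = lambda_{i,i+1} (0 <= i <= N-2), lstar i = lambda_{*,i} (0 <= i <= N-1),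
    llast = lambda_{N-1,*}, beta i j = beta_{i,j} (1 <= i <= N, 0 <= j <= i-1).
    Values of lnext, lstar, beta outside these index ranges are irrelevant. *)
Section Minimax.
Variables (N : nat) (mu L tau : R) (lnext lstar : nat -> R) (llast : R)
          (beta : nat -> nat -> R).

Definition w0v : 'cV[R]_N.+1 := evec N.+1 0.
Definition gv (i : nat) : 'cV[R]_N.+1 := evec N.+1 i.+1.
Definition fv (i : nat) : 'cV[R]_N := evec N i.

Definition wNv : 'cV[R]_N.+1 :=
  (1 - mu / L * \sum_(i < N) beta N i) *: w0v
  - \sum_(i < N) (beta N i / L) *: gv i.

Definition Spp : 'M[R]_N.+1 :=
  (2 * (L - mu))^-1 *:
    (llast *: (gv N.-1 *m (gv N.-1)^T)
     + \sum_(i < N) lstar i *: (gv i *m (gv i)^T)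
     + \sum_(i < N.-1) lnext i *: ((gv i - gv i.+1) *m (gv i - gv i.+1)^T))
  - lstar 0 *: symm (gv 0) w0v
  - \sum_(1 <= i < N.-1) (lnext i - mu / L * \sum_(j < i) beta i j) *: symm (gv i) w0v
  + \sum_(1 <= i < N.-1) \sum_(j < i) (beta i j / L) *: symm (gv i) (gv j)
  - (llast - mu / L * \sum_(j < N.-1) beta N.-1 j) *: symm (gv N.-1) w0v
  + \sum_(j < N.-1) (beta N.-1 j / L) *: symm (gv N.-1) (gv j)
  + \sum_(i < N.-1) (lnext i - mu / L * \sum_(j < i) beta i j) *: symm (gv i.+1) w0v
  - \sum_(i < N.-1) \sum_(j < i) (beta i j / L) *: symm (gv i.+1) (gv j)
  + tau *: (w0v *m w0v^T).

Definition LMI : 'M[R]_(N.+1 + 1) :=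
  block_mx Spp wNv wNv^T (1%:M : 'M[R]_1).

Definition lin_constraint : 'cV[R]_N :=
  \sum_(i < N.-1) lnext i *: (fv i.+1 - fv i)
  + \sum_(i < N) lstar i *: fv i
  - llast *: fv N.-1.

Definition feasible : Prop :=
  (forall i : nat, (i.+2 <= N)%N -> 0 <= lnext i) /\
  (forall i : nat, (i < N)%N -> 0 <= lstar i) /\
  0 <= llast /\
  psd LMI /\
  lin_constraint = 0.

Definition alpha (k j : nat) : R :=
  if beta k j == 0 then 0
  else if k == N then beta k j
  else if k == N.-1 then beta k j / llast
  else beta k j / lnext k.

End Minimax.

Definition optimal (N : nat) (mu L tau : R) (lnext lstar : nat -> R) (llast : R)
    (beta : nat -> nat -> R) : Prop :=
  feasible N mu L tau lnext lstar llast beta /\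
  forall (tau' : R) (lnext' lstar' : nat -> R) (llast' : R) (beta' : nat -> nat -> R),
    feasible N mu L tau' lnext' lstar' llast' beta' -> tau <= tau'.

Definition dotv (d : nat) (a b : 'cV[R]_d) : R := (a^T *m b) 0 0.
Definition sqnorm (d : nat) (a : 'cV[R]_d) : R := dotv a a.

Definition is_gradient (d : nat) (f : 'cV[R]_d -> R) (grad : 'cV[R]_d -> 'cV[R]_d) : Prop :=
  forall x : 'cV[R]_d,
    differentiable (f : 'cV[R]_d -> R^o) x /\
    ('d (f : 'cV[R]_d -> R^o) x : 'cV[R]_d -> R^o) = (fun h => dotv (grad x) h).

Definition in_FmuL (mu L : R) (d : nat) (f : 'cV[R]_d -> R) (grad : 'cV[R]_d -> 'cV[R]_d) : Prop :=
  is_gradient f grad /\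
  (forall (x y : 'cV[R]_d) (t : R), 0 <= t <= 1 ->
      f (t *: x + (1 - t) *: y) <= t * f x + (1 - t) * f y) /\
  (forall x y : 'cV[R]_d,
      f x <= f y + dotv (grad y) (x - y) + L / 2 * sqnorm (x - y)) /\
  (forall x y : 'cV[R]_d,
      f x >= f y + dotv (grad y) (x - y) + mu / 2 * sqnorm (x - y)).

Definition is_argmin (d : nat) (f : 'cV[R]_d -> R) (ws : 'cV[R]_d) : Prop :=
  forall x : 'cV[R]_d, f ws <= f x.

End Defs.

(* Parts (i) and (ii): the linear constraint reads
   lambda_{i,i+1} = lambda_{i-1,i} + lambda_{*,i} and lambda_{N-1,*} = lambda_{N-2,N-1}
   + lambda_{*,N-1}, so by nonnegativity a vanishing multiplier forces all earlier ones to
   vanish.  Evaluating the Schur complement S'' - w_N w_N^T of the LMI at the Gram matrix of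
   the one-dimensional vectors x_0 = 0, g_k = 1, g_j = - beta_{k,j} (j < k), g_j = 0 (j > k)
   then gives - (sum_j beta_{k,j}^2) / L >= 0, row after row.
   Part (iii): at the Gram vectors x_0 = w_0 - ws, g_i = grad ftilde(w_i) the LMI gives
   |w_N - ws|^2 <= <S'', Gram>.  Since beta = lambda alpha, the method rewrites <S'', Gram>
   as tau |w_0 - ws|^2 minus the lambda-weighted cocoercivity gaps of the convex
   (L - mu)-smooth function ftilde at (ws, w_i), (w_i, w_{i+1}) and (w_{N-1}, ws); the
   function values cancel by the linear constraint. *)

From HB Require Import structures.
From mathcomp Require Import all_boot all_order all_algebra all_classical all_reals all_analysis.
From mathcomp Require Import ring lra zify.
Import Order.TTheory GRing.Theory Num.Theory.
Set Implicit Arguments. Unset Strict Implicit.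
Local Open Scope ring_scope.

Section InnerProduct.
Variables (R : realType) (d : nat).
Implicit Types (a b c : 'cV[R]_d) (x : R).

Lemma dotvE a b : dotv a b = \sum_k a k 0 * b k 0.
Proof. by rewrite /dotv mxE; apply: eq_bigr => k _; rewrite mxE. Qed.

Lemma dotvC a b : dotv a b = dotv b a.
Proof. by rewrite /dotv [in RHS](_ : b^T *m a = (a^T *m b)^T) ?mxE // trmx_mul trmxK. Qed.

Lemma dotvDl a b c : dotv (a + b) c = dotv a c + dotv b c.
Proof. by rewrite /dotv linearD mulmxDl mxE. Qed.

Lemma dotvZl x a b : dotv (x *: a) b = x * dotv a b.
Proof. by rewrite /dotv linearZ -scalemxAl mxE. Qed.

Lemma dotvDr a b c : dotv c (a + b) = dotv c a + dotv c b.
Proof. by rewrite dotvC dotvDl !(dotvC c). Qed.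

Lemma dotvZr x a b : dotv b (x *: a) = x * dotv b a.
Proof. by rewrite dotvC dotvZl dotvC. Qed.

Lemma dotvNl a b : dotv (- a) b = - dotv a b.
Proof. by rewrite -scaleN1r dotvZl mulN1r. Qed.

Lemma dotvNr a b : dotv b (- a) = - dotv b a.
Proof. by rewrite dotvC dotvNl dotvC. Qed.

Lemma dotvBl a b c : dotv (a - b) c = dotv a c - dotv b c.
Proof. by rewrite dotvDl dotvNl. Qed.

Lemma dotvBr a b c : dotv c (a - b) = dotv c a - dotv c b.
Proof. by rewrite dotvDr dotvNr. Qed.

Lemma dotv0l a : dotv 0 a = 0.
Proof. by rewrite -(scale0r 0) dotvZl mul0r. Qed.

Lemma dotv0r a : dotv a 0 = 0.
Proof. by rewrite dotvC dotv0l. Qed.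

Lemma dotv_suml (I : Type) (r : seq I) (P : pred I) (F : I -> 'cV[R]_d) b :
  dotv (\sum_(i <- r | P i) F i) b = \sum_(i <- r | P i) dotv (F i) b.
Proof.
by elim/big_rec2: _ => [|i c e _ <-]; rewrite ?dotv0l ?dotvDl.
Qed.

Lemma dotv_sumr (I : Type) (r : seq I) (P : pred I) (F : I -> 'cV[R]_d) b :
  dotv b (\sum_(i <- r | P i) F i) = \sum_(i <- r | P i) dotv b (F i).
Proof. by rewrite dotvC dotv_suml; apply: eq_bigr => i _; rewrite dotvC. Qed.

Lemma sqnorm_ge0 a : 0 <= sqnorm a.
Proof. by rewrite /sqnorm dotvE sumr_ge0 // => k _; rewrite -expr2 sqr_ge0. Qed.

Lemma sqnorm_eq0 a : sqnorm a = 0 -> a = 0.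
Proof.
rewrite /sqnorm dotvE => /psumr_eq0P a2_eq0; apply/matrixP => k j.
rewrite ord1 mxE; apply/eqP; rewrite -sqrf_eq0 expr2 a2_eq0 // => i _.
by rewrite -expr2 sqr_ge0.
Qed.

Lemma sqnormN a : sqnorm (- a) = sqnorm a.
Proof. by rewrite /sqnorm dotvNl dotvNr opprK. Qed.

Lemma sqnormD a b : sqnorm (a + b) = sqnorm a + 2 * dotv a b + sqnorm b.
Proof. by rewrite /sqnorm !dotvDl !dotvDr (dotvC b a); ring. Qed.

End InnerProduct.

Section Bregman.
Variables (R : realType) (d : nat) (F : 'cV[R]_d -> R) (G : 'cV[R]_d -> 'cV[R]_d).

Definition bregman (x y : 'cV[R]_d) : R := F x - F y - dotv (G y) (x - y).

Lemma bregman_smooth_argmin (l : R) (ws : 'cV[R]_d) : 0 < l ->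
  (forall x y, bregman x y <= l / 2 * sqnorm (x - y)) ->
  (forall x, F ws <= F x) -> G ws = 0.
Proof.
move=> l_gt0 smooth ws_min; apply: sqnorm_eq0; set u := G ws.
have := smooth (ws - l^-1 *: u) ws; have := ws_min (ws - l^-1 *: u); rewrite /bregman -/u.
have -> : ws - l^-1 *: u - ws = - (l^-1 *: u) by rewrite addrAC subrr add0r.
rewrite sqnormN /sqnorm dotvNr !dotvZr dotvZl -/(sqnorm u).
have -> : l / 2 * (l^-1 * (l^-1 * sqnorm u)) = l^-1 * sqnorm u / 2.
  by field; rewrite gt_eqF.
move=> min_le smooth_le; have : l^-1 * sqnorm u <= 0 by lra.
by rewrite pmulr_rle0 ?invr_gt0 // => u_le0; apply/eqP; rewrite eq_le u_le0 sqnorm_ge0.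
Qed.

(* Compare [F] at [x - (G x - G y) / l] using smoothness at [x] and convexity at [y]. *)
Lemma bregman_cocoercive (l : R) : 0 < l ->
  (forall x y, bregman x y <= l / 2 * sqnorm (x - y)) ->
  (forall x y, 0 <= bregman x y) ->
  forall x y, sqnorm (G x - G y) / (2 * l) <= bregman x y.
Proof.
move=> l_gt0 smooth convex x y.
set u := G x - G y; set z := x - l^-1 *: u.
have := smooth z x; have := convex z y; rewrite /bregman.
have -> : z - x = - (l^-1 *: u) by rewrite /z addrAC subrr add0r.
have -> : z - y = (x - y) - l^-1 *: u by rewrite /z addrAC.
have uu : l^-1 * sqnorm u = l^-1 * dotv (G x) u - l^-1 * dotv (G y) u.
  by rewrite /sqnorm {1}/u dotvBl mulrBr.
have e1 : l / 2 * (l^-1 * (l^-1 * sqnorm u)) = l^-1 * sqnorm u / 2.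
  by field; rewrite gt_eqF.
have e2 : sqnorm u / (2 * l) = l^-1 * sqnorm u / 2 by field; rewrite gt_eqF.
clearbody u z.
rewrite sqnormN /sqnorm dotvZl dotvZr -/(sqnorm u) e1 e2.
rewrite !(dotvNr, dotvZr, dotvBr).
lra.
Qed.

End Bregman.

Section ShiftedObjective.
Variables (R : realType) (d : nat) (mu L : R).
Variables (f : 'cV[R]_d -> R) (grad : 'cV[R]_d -> 'cV[R]_d) (ws : 'cV[R]_d).

Definition fshift (x : 'cV[R]_d) : R := f x - mu / 2 * sqnorm (x - ws).
Definition gshift (x : 'cV[R]_d) : 'cV[R]_d := grad x - mu *: (x - ws).

Definition interp_gap (x y : 'cV[R]_d) : R :=
  bregman fshift gshift x y - sqnorm (gshift x - gshift y) / (2 * (L - mu)).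

Lemma bregman_shift x y :
  bregman fshift gshift x y = bregman f grad x y - mu / 2 * sqnorm (x - y).
Proof.
rewrite /bregman /fshift /gshift.
have -> : x - ws = (y - ws) + (x - y) by rewrite [RHS]addrC addrA subrK.
by rewrite sqnormD !(dotvBl, dotvZl); field.
Qed.

Hypothesis f_FmuL : in_FmuL mu L f grad.

Lemma fshift_smooth x y :
  bregman fshift gshift x y <= (L - mu) / 2 * sqnorm (x - y).
Proof.
case: f_FmuL => _ [_ [smooth _]]; have := smooth x y.
rewrite bregman_shift /bregman; lra.
Qed.

Lemma fshift_convex x y : 0 <= bregman fshift gshift x y.
Proof.
case: f_FmuL => _ [_ [_ strong]]; have := strong x y.
rewrite bregman_shift /bregman; lra.
Qed.

Lemma interp_gap_ge0 x y : mu < L -> 0 <= interp_gap x y.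
Proof.
move=> mu_lt_L; rewrite subr_ge0; apply: bregman_cocoercive; rewrite ?subr_gt0 //.
  exact: fshift_smooth.
exact: fshift_convex.
Qed.

Lemma gshift_argmin : 0 < L -> is_argmin f ws -> gshift ws = 0.
Proof.
move=> L_gt0 ws_min; rewrite /gshift subrr scaler0 subr0.
apply: (bregman_smooth_argmin L_gt0 _ ws_min) => x y.
case: f_FmuL => _ [_ [smooth _]]; have := smooth x y; rewrite /bregman; lra.
Qed.

End ShiftedObjective.

Lemma sum_mul_delta (R : pzRingType) (n k : nat) (F : nat -> R) :
  \sum_(a < n) F a * (k == a)%:R = if (k < n)%N then F k else 0.
Proof.
under eq_bigr do rewrite mulr_natr mulrb eq_sym.
by rewrite -big_mkcond (big_ord1_eq _ F).
Qed.

Lemma block_psd_schur (R : realType) (n : nat) (S : 'M[R]_n) (w y : 'cV[R]_n) :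
  psd (block_mx S w w^T (1%:M : 'M[R]_1)) -> 0 <= (y^T *m (S - w *m w^T) *m y) 0 0.
Proof.
case=> _ /(_ (col_mx y (- (w^T *m y)))).
rewrite tr_col_mx mul_row_block mul_row_col raddfN /= trmx_mul trmxK mulmx1 addrN.
by rewrite mul0mx addr0 mulNmx mulmxBr !mulmxBl !mulmxA.
Qed.

Section GramForm.
Variables (R : realType) (d n : nat) (V : nat -> 'cV[R]_d).

Definition gram_mx : 'M[R]_(d, n) := \matrix_(r, a) V a r 0.

(* The Frobenius product of [M] with the Gram matrix of [V 0, ..., V n.-1]. *)
Definition gram_form (M : 'M[R]_n) : R := \tr (gram_mx *m M *m gram_mx^T).

Lemma gram_formD (M M' : 'M[R]_n) : gram_form (M + M') = gram_form M + gram_form M'.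
Proof. by rewrite /gram_form mulmxDr mulmxDl mxtraceD. Qed.

Lemma gram_formZ (a : R) (M : 'M[R]_n) : gram_form (a *: M) = a * gram_form M.
Proof. by rewrite /gram_form -scalemxAr -scalemxAl mxtraceZ. Qed.

Lemma gram_formN (M : 'M[R]_n) : gram_form (- M) = - gram_form M.
Proof. by rewrite -scaleN1r gram_formZ mulN1r. Qed.

Lemma gram_form_sum (I : Type) (r : seq I) (P : pred I) (M : I -> 'M[R]_n) :
  gram_form (\sum_(i <- r | P i) M i) = \sum_(i <- r | P i) gram_form (M i).
Proof.
elim/big_rec2: _ => [|i c e _ <-]; last by rewrite gram_formD.
by rewrite /gram_form mulmx0 mul0mx mxtrace0.
Qed.

Lemma gram_form_sumE (I : Type) (M : I -> 'M[R]_n) (F : I -> R) :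
  (forall i, gram_form (M i) = F i) -> forall (r : seq I) (P : pred I) (a : I -> R),
  gram_form (\sum_(i <- r | P i) a i *: M i) = \sum_(i <- r | P i) a i * F i.
Proof. by move=> MF r P a; rewrite gram_form_sum; apply: eq_bigr => i _; rewrite gram_formZ MF. Qed.

Lemma gram_form_outer (a b : 'cV[R]_n) :
  gram_form (a *m b^T) = dotv (gram_mx *m a) (gram_mx *m b).
Proof.
rewrite /gram_form !mulmxA -mulmxA -trmx_mul /mxtrace dotvE.
by apply: eq_bigr => r _; rewrite !mxE big_ord1 !mxE.
Qed.

Lemma gram_form_symm (a b : 'cV[R]_n) :
  gram_form (symm a b) = dotv (gram_mx *m a) (gram_mx *m b).
Proof.
rewrite /symm gram_formZ gram_formD !gram_form_outer (dotvC (gram_mx *m b)).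
by set x := dotv _ _; field.
Qed.

Lemma gram_form_ge0 (M : 'M[R]_n) :
  (forall y : 'cV[R]_n, 0 <= (y^T *m M *m y) 0 0) -> 0 <= gram_form M.
Proof.
move=> M_psd; rewrite /gram_form /mxtrace sumr_ge0 // => r _.
have -> : (gram_mx *m M *m gram_mx^T) r r = ((row r gram_mx)^T^T *m M *m (row r gram_mx)^T) 0 0.
  rewrite trmxK !mxE; apply: eq_bigr => b _; rewrite !mxE; congr (_ * _).
  by apply: eq_bigr => a _; rewrite !mxE.
exact: M_psd.
Qed.

Hypothesis V_supp : forall k, (n <= k)%N -> V k = 0.

Lemma gram_mx_evec k : gram_mx *m evec R n k = V k.
Proof.
apply/matrixP => r c; rewrite ord1 !mxE.
under eq_bigr do rewrite !mxE eq_sym.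
rewrite (sum_mul_delta _ _ (fun j => V j r 0)); case: ltnP => // n_le_k.
by rewrite V_supp ?mxE.
Qed.

End GramForm.

Section MinimaxForm.
Variables (R : realType) (N : nat) (mu L tau : R) (lnext lstar : nat -> R) (llast : R).
Variable beta : nat -> nat -> R.
Variables (d : nat) (V : nat -> 'cV[R]_d).
Hypothesis V_supp : forall k, (N < k)%N -> V k = 0.

Local Notation x0 := (V 0).
Local Notation g i := (V i.+1).
Local Notation P := (gram_mx N.+1 V).

Definition Spp_form : R :=
  (2 * (L - mu))^-1 *
    (llast * dotv (g N.-1) (g N.-1)
     + \sum_(i < N) lstar i * dotv (g i) (g i)
     + \sum_(i < N.-1) lnext i * dotv (g i - g i.+1) (g i - g i.+1))
  - lstar 0 * dotv (g 0) x0
  - \sum_(1 <= i < N.-1) (lnext i - mu / L * \sum_(j < i) beta i j) * dotv (g i) x0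
  + \sum_(1 <= i < N.-1) \sum_(j < i) (beta i j / L) * dotv (g i) (g j)
  - (llast - mu / L * \sum_(j < N.-1) beta N.-1 j) * dotv (g N.-1) x0
  + \sum_(j < N.-1) (beta N.-1 j / L) * dotv (g N.-1) (g j)
  + \sum_(i < N.-1) (lnext i - mu / L * \sum_(j < i) beta i j) * dotv (g i.+1) x0
  - \sum_(i < N.-1) \sum_(j < i) (beta i j / L) * dotv (g i.+1) (g j)
  + tau * dotv x0 x0.

Let P_gv i : P *m gv R N i = g i. Proof. exact: gram_mx_evec. Qed.
Let P_w0v : P *m w0v R N = x0. Proof. exact: gram_mx_evec. Qed.

Let gram_form_gg i j : gram_form V (symm (gv R N i) (gv R N j)) = dotv (g i) (g j).
Proof. by rewrite gram_form_symm !P_gv. Qed.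

Let gram_form_gx i : gram_form V (symm (gv R N i) (w0v R N)) = dotv (g i) x0.
Proof. by rewrite gram_form_symm P_gv P_w0v. Qed.

Let gram_form_gsq i : gram_form V (gv R N i *m (gv R N i)^T) = dotv (g i) (g i).
Proof. by rewrite gram_form_outer P_gv. Qed.

Let gram_form_gdiff i :
  gram_form V ((gv R N i - gv R N i.+1) *m (gv R N i - gv R N i.+1)^T)
  = dotv (g i - g i.+1) (g i - g i.+1).
Proof. by rewrite gram_form_outer mulmxBr !P_gv. Qed.

Lemma gram_form_Spp :
  gram_form V (Spp N mu L tau lnext lstar llast beta) = Spp_form.
Proof.
have rows (I : Type) (h b : I -> nat) (r : seq I) : gram_form V
      (\sum_(i <- r) \sum_(j < h i) (beta (h i) j / L) *: symm (gv R N (b i)) (gv R N j))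
    = \sum_(i <- r) \sum_(j < h i) (beta (h i) j / L) * dotv (g (b i)) (g j).
  rewrite gram_form_sum; apply: eq_bigr => i _.
  by rewrite (gram_form_sumE (fun j : 'I_(h i) => gram_form_gg (b i) j)).
rewrite /Spp !(gram_formD, gram_formN) (rows _ (fun i => i) (fun i => i)).
rewrite (rows _ (@nat_of_ord N.-1) (fun i => i.+1)).
rewrite (gram_form_sumE (fun i : nat => gram_form_gx i)).
rewrite (gram_form_sumE (fun i : 'I_N.-1 => gram_form_gx i.+1)).
rewrite (gram_form_sumE (fun j : 'I_N.-1 => gram_form_gg N.-1 j)).
rewrite !(gram_form_gx, gram_form_gsq, gram_formZ, gram_formD).
rewrite (gram_form_sumE (fun i : 'I_N => gram_form_gsq i)).
rewrite (gram_form_sumE (fun i : 'I_N.-1 => gram_form_gdiff i)).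
by rewrite gram_form_outer P_w0v.
Qed.

Lemma sqnorm_wNv_le_Spp_form : psd (LMI N mu L tau lnext lstar llast beta) ->
  sqnorm (P *m wNv N mu L beta) <= Spp_form.
Proof.
move=> LMI_psd; have := gram_form_ge0 V (fun y => block_psd_schur y LMI_psd).
by rewrite gram_formD gram_formN gram_form_outer gram_form_Spp subr_ge0.
Qed.

Lemma gram_mx_wNv : P *m wNv N mu L beta =
  (1 - mu / L * \sum_(i < N) beta N i) *: x0 - \sum_(i < N) (beta N i / L) *: g i.
Proof.
rewrite /wNv mulmxBr mulmx_sumr -scalemxAr P_w0v; congr (_ - _).
by apply: eq_bigr => i _; rewrite -scalemxAr P_gv.
Qed.

End MinimaxForm.

Section LinearConstraint.
Variables (R : realType) (N : nat) (lnext lstar : nat -> R) (llast : R).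

Lemma lin_constraint_coord m (m_lt_N : (m < N)%N) :
  lin_constraint N lnext lstar llast (Ordinal m_lt_N) 0 =
  (if m is m'.+1 then (if (m' < N.-1)%N then lnext m' else 0) else 0)
  - (if (m < N.-1)%N then lnext m else 0) + lstar m
  - (if m == N.-1 then llast else 0).
Proof.
rewrite /lin_constraint !mxE !summxE /=.
under eq_bigr do rewrite !mxE mulrBr.
under [X in _ + X - _]eq_bigr do rewrite !mxE.
rewrite sumrB !sum_mul_delta m_lt_N; congr (_ - _ + _ - _); last first.
  by case: (m == N.-1); rewrite ?mulr1 ?mulr0.
case: m m_lt_N => [|m] _ /=; first by rewrite big1 // => i _; rewrite mulr0.
exact: sum_mul_delta.
Qed.

Hypothesis N_gt1 : (1 < N)%N.
Hypothesis lin_eq0 : lin_constraint N lnext lstar llast = 0.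

Lemma lnext_rec m : (m.+1 < N)%N ->
  lnext m = (if m is m'.+1 then lnext m' else 0) + lstar m.
Proof.
move=> m_lt; have := lin_constraint_coord (ltnW m_lt); rewrite lin_eq0 mxE.
have -> : (m < N.-1)%N by lia.
have -> : (m == N.-1) = false by apply/eqP; lia.
case: m m_lt => [|m] m_lt; last have -> : (m < N.-1)%N by lia.
all: by rewrite /= => coord_eq0; lra.
Qed.

Lemma llast_rec : llast = lnext N.-2 + lstar N.-1.
Proof.
have N1_lt : (N.-1 < N)%N by lia.
have := lin_constraint_coord N1_lt; rewrite lin_eq0 mxE eqxx ltnn.
have -> : N.-1 = N.-2.+1 by lia.
by rewrite ltnSn => coord_eq0; lra.
Qed.

Lemma lin_constraint_weighted_sum (h : nat -> R) :
  \sum_(i < N) lstar i * h i + \sum_(i < N.-1) lnext i * (h i.+1 - h i)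
  - llast * h N.-1 = 0.
Proof.
pose hv : 'cV[R]_N := \col_(m < N) h m.
have fv_hv i : (i < N)%N -> dotv (fv R N i) hv = h i.
  move=> i_lt; rewrite dotvE.
  under eq_bigr do rewrite !mxE mulrC eq_sym.
  by rewrite sum_mul_delta i_lt.
have := congr1 (fun v => dotv v hv) lin_eq0.
rewrite /= dotv0l /lin_constraint !(dotvBl, dotvDl, dotv_suml) dotvZl fv_hv; last by lia.
have -> : \sum_(i < N.-1) dotv (lnext i *: (fv R N i.+1 - fv R N i)) hv
    = \sum_(i < N.-1) lnext i * (h i.+1 - h i).
  apply: eq_bigr => i _; have i_lt := ltn_ord i.
  by rewrite dotvZl dotvBl !fv_hv //; lia.
have -> : \sum_(i < N) dotv (lstar i *: fv R N i) hv = \sum_(i < N) lstar i * h i.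
  by apply: eq_bigr => i _; rewrite dotvZl fv_hv.
lra.
Qed.

Hypothesis lnext_ge0 : forall i, (i.+2 <= N)%N -> 0 <= lnext i.
Hypothesis lstar_ge0 : forall i, (i < N)%N -> 0 <= lstar i.

Lemma lnext_eq0_prefix i : (i.+1 < N)%N -> lnext i = 0 ->
  forall m, (m <= i)%N -> lnext m = 0 /\ lstar m = 0.
Proof.
elim: i => [|i IH] i_lt lnext_i_eq0 m.
  rewrite leqn0 => /eqP ->; split=> //.
  by have := lnext_rec i_lt; rewrite lnext_i_eq0 add0r.
have := lnext_rec i_lt; rewrite lnext_i_eq0 => rec.
have lnext_eq0 : lnext i = 0.
  by have := lnext_ge0 (ltnW i_lt); have := lstar_ge0 (ltnW i_lt); lra.
rewrite leq_eqVlt => /orP[/eqP -> | m_lt]; last exact: IH (ltnW i_lt) lnext_eq0 m m_lt.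
by split=> //; move: rec; rewrite lnext_eq0 add0r.
Qed.

End LinearConstraint.

Section TestVector.
Variables (R : realType) (N : nat) (mu L tau : R) (lnext lstar : nat -> R) (llast : R).
Variables (beta : nat -> nat -> R) (k : nat).
Hypotheses (L_gt0 : 0 < L) (k_gt0 : (0 < k)%N) (k_lt_N : (k < N)%N).
Hypothesis beta_prev_eq0 : forall m j, (m < k)%N -> (j < m)%N -> beta m j = 0.
Hypothesis lstar_eq0 : forall m, (m <= k)%N -> lstar m = 0.
Hypothesis lnext_eq0 : forall m, (m <= k)%N -> (m < N.-1)%N -> lnext m = 0.
Hypothesis llast_eq0 : k = N.-1 -> llast = 0.

Definition test_vec (a : nat) : 'cV[R]_1 := const_mx
  (if a is j.+1 then if j == k then 1 else if (j < k)%N then - beta k j else 0 else 0).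

Let dot_test a b : dotv (test_vec a) (test_vec b) = test_vec a 0 0 * test_vec b 0 0.
Proof. by rewrite dotvE big_ord1. Qed.

Let test_vec0 : test_vec 0 = 0.
Proof. by apply/matrixP => i j; rewrite !mxE. Qed.

Let test_vec_gt j : (k < j)%N -> test_vec j.+1 = 0.
Proof.
move=> k_lt_j; apply/matrixP => r c; rewrite !mxE.
by rewrite ltnNge (ltnW k_lt_j) gtn_eqF.
Qed.

Let test_row :
  \sum_(j < k) beta k j / L * dotv (test_vec k.+1) (test_vec j.+1)
  = - (\sum_(j < k) beta k j ^+ 2) / L.
Proof.
rewrite mulNr mulr_suml -sumrN; apply: eq_bigr => j _.
rewrite dot_test !mxE /= eqxx ltn_ord ltn_eqF //; ring.
Qed.

Let row_eq0 i : i != k ->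
  \sum_(j < i) beta i j / L * dotv (test_vec i.+1) (test_vec j.+1) = 0.
Proof.
rewrite neq_ltn; case/orP => [i_lt | k_lt]; apply: big1 => j _.
  by rewrite beta_prev_eq0 ?mul0r.
by rewrite test_vec_gt ?dotv0l ?mulr0.
Qed.

Let multiplier_terms_eq0 :
  llast * dotv (test_vec N.-1.+1) (test_vec N.-1.+1)
  + \sum_(i < N) lstar i * dotv (test_vec i.+1) (test_vec i.+1)
  + \sum_(i < N.-1) lnext i * dotv (test_vec i.+1 - test_vec i.+2)
                                   (test_vec i.+1 - test_vec i.+2) = 0.
Proof.
rewrite !big1 ?addr0.
- case: (eqVneq k N.-1) => [/llast_eq0 -> | k_ne]; first by rewrite mul0r.
  by rewrite test_vec_gt ?dotv0r ?mulr0 //; lia.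
- move=> i _; case: (leqP i k) => [i_le | k_lt]; first by rewrite lnext_eq0 ?mul0r.
  by rewrite !test_vec_gt ?subrr ?dotv0l ?mulr0 //; lia.
- move=> i _; case: (leqP i k) => [i_le | k_lt]; first by rewrite lstar_eq0 ?mul0r.
  by rewrite test_vec_gt ?dotv0l ?mulr0.
Qed.

Let shifted_rows_eq0 :
  \sum_(i < N.-1) \sum_(j < i) beta i j / L * dotv (test_vec i.+2) (test_vec j.+1) = 0.
Proof.
apply: big1 => i _; apply: big1 => j _; case: (ltnP i k) => [i_lt | k_le].
  by rewrite beta_prev_eq0 ?mul0r.
by rewrite test_vec_gt ?dotv0l ?mulr0.
Qed.

Let rows_eq :
  \sum_(1 <= i < N.-1) \sum_(j < i) beta i j / L * dotv (test_vec i.+1) (test_vec j.+1)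
  + \sum_(j < N.-1) beta N.-1 j / L * dotv (test_vec N.-1.+1) (test_vec j.+1)
  = - (\sum_(j < k) beta k j ^+ 2) / L.
Proof.
case: (eqVneq k N.-1) => [k_eq | k_ne].
  rewrite -k_eq test_row big_seq big1 ?add0r // => i; rewrite mem_index_iota => i_lt.
  by apply: row_eq0; rewrite neq_ltn; case/andP: i_lt => _ ->.
rewrite (bigD1_seq k) ?mem_index_iota ?iota_uniq //=; last by lia.
rewrite test_row [X in _ + X + _]big1_seq ?addr0; last by move=> i /andP[ne _]; apply: row_eq0.
by rewrite [X in _ + X]big1 ?addr0 // => j _; rewrite test_vec_gt ?dotv0l ?mulr0 //; lia.
Qed.

Lemma Spp_form_test_vec :
  Spp_form N mu L tau lnext lstar llast beta test_vec = - (\sum_(j < k) beta k j ^+ 2) / L.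
Proof.
have x0_terms (I : Type) (r : seq I) (P : pred I) (c : I -> R) (h : I -> nat) :
    \sum_(i <- r | P i) c i * dotv (test_vec (h i)) 0 = 0.
  by apply: big1 => i _; rewrite dotv0r mulr0.
rewrite /Spp_form test_vec0 multiplier_terms_eq0 !x0_terms shifted_rows_eq0 !dotv0r !mulr0.
by rewrite -rows_eq; lra.
Qed.

Lemma beta_row_eq0 : psd (LMI N mu L tau lnext lstar llast beta) ->
  forall j, (j < k)%N -> beta k j = 0.
Proof.
move=> LMI_psd j j_lt.
have test_vec_supp a : (N < a)%N -> test_vec a = 0.
  by case: a => // a N_lt; apply: test_vec_gt; lia.
have := le_trans (sqnorm_ge0 _) (sqnorm_wNv_le_Spp_form test_vec_supp LMI_psd).
rewrite Spp_form_test_vec mulNr oppr_ge0 pmulr_lle0 ?invr_gt0 // => sum_le0.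
have sum_eq0 : \sum_(j < k) beta k j ^+ 2 = 0.
  by apply/eqP; rewrite eq_le sum_le0 sumr_ge0 // => i _; apply: sqr_ge0.
have := @psumr_eq0P _ _ _ (fun i : 'I_k => beta k i ^+ 2) (fun i _ => sqr_ge0 _) sum_eq0.
by move=> /(_ (Ordinal j_lt) isT)/eqP; rewrite sqrf_eq0 => /eqP.
Qed.

End TestVector.

Section VanishingRows.
Variables (R : realType) (N : nat) (mu L tau : R) (lnext lstar : nat -> R) (llast : R).
Variable beta : nat -> nat -> R.
Hypotheses (N_gt1 : (1 < N)%N) (L_gt0 : 0 < L).
Hypothesis feas : feasible N mu L tau lnext lstar llast beta.

Lemma beta_row_eq0_of_lnext i : (i < N.-1)%N -> lnext i = 0 ->
  forall j, (j < i)%N -> beta i j = 0.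
Proof.
case: feas => lnext_ge0 [lstar_ge0 [_ [LMI_psd lin_eq0]]] i_lt lnext_i_eq0.
have i1_lt : (i.+1 < N)%N by lia.
have prefix := lnext_eq0_prefix N_gt1 lin_eq0 lnext_ge0 lstar_ge0 i1_lt lnext_i_eq0.
have lnext_eq0 m : (m <= i)%N -> lnext m = 0 by move=> /prefix[].
have lstar_eq0 m : (m <= i)%N -> lstar m = 0 by move=> /prefix[].
suff rows k : (k <= i)%N -> forall j, (j < k)%N -> beta k j = 0 by apply: rows.
elim/ltn_ind: k => k IH k_le j j_lt.
apply: (beta_row_eq0 L_gt0 _ _ _ _ _ _ LMI_psd j_lt).
- by lia.
- by lia.
- by move=> m j' m_lt; apply: IH => //; lia.
- by move=> m m_le; apply: lstar_eq0; lia.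
- by move=> m m_le _; apply: lnext_eq0; lia.
- by lia.
Qed.

Lemma beta_row_eq0_of_llast : llast = 0 ->
  forall j, (j < N.-1)%N -> beta N.-1 j = 0.
Proof.
case: feas => lnext_ge0 [lstar_ge0 [_ [LMI_psd lin_eq0]]] llast_eq0.
have N2_lt : (N.-2.+1 < N)%N by lia.
have N1_lt : (N.-1 < N)%N by lia.
have [lnext_N2_eq0 lstar_N1_eq0] : lnext N.-2 = 0 /\ lstar N.-1 = 0.
  have := llast_rec N_gt1 lin_eq0; rewrite llast_eq0.
  by have := lnext_ge0 N.-2 N2_lt; have := lstar_ge0 N.-1 N1_lt; split; lra.
have prefix := lnext_eq0_prefix N_gt1 lin_eq0 lnext_ge0 lstar_ge0 N2_lt lnext_N2_eq0.
have lnext_eq0 m : (m <= N.-2)%N -> lnext m = 0 by move=> /prefix[].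
have lstar_eq0 m : (m <= N.-2)%N -> lstar m = 0 by move=> /prefix[].
move=> j j_lt; apply: (beta_row_eq0 L_gt0 _ _ _ _ _ _ LMI_psd j_lt) => //.
- by lia.
- move=> m j' m_lt j'_lt; apply: (beta_row_eq0_of_lnext _ _ j'_lt); first by lia.
  by apply: lnext_eq0; lia.
- move=> m m_le; case: (ltnP m N.-1) => [m_lt | m_ge]; first by apply: lstar_eq0; lia.
  by have -> : m = N.-1 by lia.
- by move=> m m_le m_lt; apply: lnext_eq0; lia.
Qed.

Lemma beta_lnext_alpha i j : (0 < i)%N -> (i < N.-1)%N -> (j < i)%N ->
  beta i j = lnext i * alpha N lnext llast beta i j.
Proof.
move=> i_gt0 i_lt j_lt; rewrite /alpha.
have [-> | beta_neq0] := eqVneq (beta i j) 0; first by rewrite mulr0.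
rewrite ifN_eq ?ifN_eq; [|by apply/eqP; lia|by apply/eqP; lia].
have lnext_neq0 : lnext i != 0.
  by apply: contra beta_neq0 => /eqP lnext_eq0; rewrite (beta_row_eq0_of_lnext i_lt).
by rewrite mulrC divfK.
Qed.

Lemma beta_llast_alpha j : (j < N.-1)%N ->
  beta N.-1 j = llast * alpha N lnext llast beta N.-1 j.
Proof.
move=> j_lt; rewrite /alpha.
have [-> | beta_neq0] := eqVneq (beta N.-1 j) 0; first by rewrite mulr0.
rewrite ifN_eq ?eqxx; last by apply/eqP; lia.
have llast_neq0 : llast != 0.
  by apply: contra beta_neq0 => /eqP llast_eq0; rewrite beta_row_eq0_of_llast.
by rewrite mulrC divfK.
Qed.

End VanishingRows.

Lemma alpha_last_row (R : realType) (N : nat) (lnext : nat -> R) (llast : R)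
    (beta : nat -> nat -> R) j :
  alpha N lnext llast beta N j = beta N j.
Proof. by rewrite /alpha eqxx; case: eqP. Qed.

Section PerformanceEstimation.
Variables (R : realType) (N : nat) (mu L tau : R) (lnext lstar : nat -> R) (llast : R).
Variable beta : nat -> nat -> R.
Hypotheses (N_gt1 : (1 < N)%N) (mu_ge0 : 0 <= mu) (mu_lt_L : mu < L).
Hypothesis feas : feasible N mu L tau lnext lstar llast beta.
Variables (d : nat) (f : 'cV[R]_d -> R) (grad : 'cV[R]_d -> 'cV[R]_d) (ws : 'cV[R]_d).
Variable w : nat -> 'cV[R]_d.
Hypotheses (f_FmuL : in_FmuL mu L f grad) (ws_min : is_argmin f ws).
Local Notation alpha := (alpha N lnext llast beta).
Hypothesis w_method : forall k, (1 <= k <= N)%N ->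
  w k - ws = (1 - mu / L * \sum_(i < k) alpha k i) *: (w 0%N - ws)
             - \sum_(i < k) (alpha k i / L) *: (grad (w i) - mu *: (w i - ws)).

Let L_gt0 : 0 < L. Proof. exact: le_lt_trans mu_ge0 mu_lt_L. Qed.
Let lin_eq0 : lin_constraint N lnext lstar llast = 0. Proof. by case: feas => _ [_ [_ []]]. Qed.

Definition pep_vec (a : nat) : 'cV[R]_d :=
  if a is i.+1 then if (i < N)%N then gshift mu grad ws (w i) else 0 else w 0%N - ws.

Local Notation x i := (w i - ws).
Local Notation g i := (pep_vec i.+1).
Local Notation x0 := (pep_vec 0).

Let g_gshift i : (i < N)%N -> g i = gshift mu grad ws (w i).
Proof. by move=> i_lt /=; rewrite i_lt. Qed.

Let pep_vec_supp k : (N < k)%N -> pep_vec k = 0.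
Proof. by case: k => [//|k] N_lt /=; rewrite ltnNge -ltnS N_lt. Qed.

Lemma scaled_iterate i (lam : R) : (0 < i <= N)%N ->
  (forall j, (j < i)%N -> beta i j = lam * alpha i j) ->
  lam *: x i = (lam - mu / L * \sum_(j < i) beta i j) *: x0 - \sum_(j < i) (beta i j / L) *: g j.
Proof.
move=> i_range beta_eq; rewrite w_method // scalerBr scalerA scaler_sumr.
congr (_ *: _ - _).
  rewrite mulrBr mulr1 mulrCA mulr_sumr; congr (_ - _ * _).
  by apply: eq_bigr => j _; rewrite beta_eq.
apply: eq_bigr => j _; rewrite scalerA g_gshift ?beta_eq ?mulrA //.
by apply: leq_trans (ltn_ord j) _; case/andP: i_range.
Qed.

Lemma lnext_cross_term i : (0 < i)%N -> (i < N.-1)%N ->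
  lnext i * dotv (g i.+1 - g i) (x i) =
  (lnext i - mu / L * \sum_(j < i) beta i j) * (dotv (g i.+1) x0 - dotv (g i) x0)
  - \sum_(j < i) beta i j / L * dotv (g i.+1) (g j)
  + \sum_(j < i) beta i j / L * dotv (g i) (g j).
Proof.
move=> i_gt0 i_lt; rewrite -dotvZr (scaled_iterate (lam := lnext i)); last 2 first.
- by apply/andP; split; lia.
- by move=> j; apply: (beta_lnext_alpha N_gt1 L_gt0 feas).
rewrite dotvBr dotvZr dotv_sumr dotvBl.
have -> : \sum_(j < i) dotv (g i.+1 - g i) ((beta i j / L) *: g j)
    = \sum_(j < i) beta i j / L * dotv (g i.+1) (g j)
      - \sum_(j < i) beta i j / L * dotv (g i) (g j).
  by rewrite -sumrB; apply: eq_bigr => j _; rewrite dotvZr dotvBl mulrBr.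
ring.
Qed.

Lemma llast_cross_term :
  llast * dotv (g N.-1) (x N.-1) =
  (llast - mu / L * \sum_(j < N.-1) beta N.-1 j) * dotv (g N.-1) x0
  - \sum_(j < N.-1) beta N.-1 j / L * dotv (g N.-1) (g j).
Proof.
rewrite -dotvZr (scaled_iterate (lam := llast)); last 2 first.
- by apply/andP; split; lia.
- by move=> j; apply: (beta_llast_alpha N_gt1 L_gt0 feas).
rewrite dotvBr dotvZr dotv_sumr; congr (_ - _).
by apply: eq_bigr => j _; rewrite dotvZr.
Qed.

Lemma Spp_form_cross_terms :
  - lstar 0 * dotv (g 0) x0
  - \sum_(1 <= i < N.-1) (lnext i - mu / L * \sum_(j < i) beta i j) * dotv (g i) x0
  + \sum_(1 <= i < N.-1) \sum_(j < i) (beta i j / L) * dotv (g i) (g j)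
  - (llast - mu / L * \sum_(j < N.-1) beta N.-1 j) * dotv (g N.-1) x0
  + \sum_(j < N.-1) (beta N.-1 j / L) * dotv (g N.-1) (g j)
  + \sum_(i < N.-1) (lnext i - mu / L * \sum_(j < i) beta i j) * dotv (g i.+1) x0
  - \sum_(i < N.-1) \sum_(j < i) (beta i j / L) * dotv (g i.+1) (g j)
  = \sum_(i < N.-1) lnext i * dotv (g i.+1 - g i) (x i)
    - llast * dotv (g N.-1) (x N.-1).
Proof.
have N1_gt0 : (0 < N.-1)%N by lia.
have first_split (F : nat -> R) : \sum_(i < N.-1) F i = F 0%N + \sum_(1 <= i < N.-1) F i.
  by rewrite -(big_mkord xpredT F) big_ltn.
rewrite (first_split (fun i => (lnext i - mu / L * \sum_(j < i) beta i j) * dotv (g i.+1) x0)).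
rewrite (first_split (fun i => \sum_(j < i) beta i j / L * dotv (g i.+1) (g j))).
rewrite (first_split (fun i => lnext i * dotv (g i.+1 - g i) (x i))) /=.
rewrite !big_ord0 mulr0 subr0 add0r llast_cross_term.
have -> : \sum_(1 <= i < N.-1) lnext i * dotv (g i.+1 - g i) (x i) =
  \sum_(1 <= i < N.-1) (lnext i - mu / L * \sum_(j < i) beta i j) * dotv (g i.+1) x0
  - \sum_(1 <= i < N.-1) (lnext i - mu / L * \sum_(j < i) beta i j) * dotv (g i) x0
  - \sum_(1 <= i < N.-1) \sum_(j < i) beta i j / L * dotv (g i.+1) (g j)
  + \sum_(1 <= i < N.-1) \sum_(j < i) beta i j / L * dotv (g i) (g j).
  rewrite -!sumrB -big_split /=; apply: eq_big_nat => i /andP[i_gt0 i_lt].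
  by rewrite lnext_cross_term // mulrBr.
have -> : lnext 0 = lstar 0 by rewrite (lnext_rec N_gt1 lin_eq0 N_gt1) add0r.
rewrite dotvBl; lra.
Qed.

Local Notation gap := (interp_gap mu L f grad ws).
Local Notation B i := (bregman (fshift mu f ws) (gshift mu grad ws) ws (w i)).

Let gap_ws_left i : (i < N)%N ->
  gap ws (w i) = B i - dotv (g i) (g i) / (2 * (L - mu)).
Proof.
move=> i_lt; rewrite /interp_gap (gshift_argmin f_FmuL L_gt0 ws_min) sub0r sqnormN.
by rewrite g_gshift.
Qed.

Let gap_consecutive i : (i.+1 < N)%N ->
  gap (w i) (w i.+1) = B i.+1 - B i - dotv (g i.+1 - g i) (x i)
                       - dotv (g i - g i.+1) (g i - g i.+1) / (2 * (L - mu)).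
Proof.
move=> i_lt; rewrite /interp_gap /bregman /sqnorm (g_gshift i_lt) (g_gshift (ltnW i_lt)).
move: (fshift mu f ws) (gshift mu grad ws) (2 * (L - mu)) => F G l.
by rewrite !(dotvBl, dotvBr); ring.
Qed.

Let gap_ws_right : gap (w N.-1) ws =
  - B N.-1 + dotv (g N.-1) (x N.-1) - dotv (g N.-1) (g N.-1) / (2 * (L - mu)).
Proof.
have N1_lt : (N.-1 < N)%N by lia.
rewrite /interp_gap /bregman /sqnorm (gshift_argmin f_FmuL L_gt0 ws_min) subr0 dotv0l.
rewrite (g_gshift N1_lt); move: (fshift mu f ws) (gshift mu grad ws) (2 * (L - mu)) => F G l.
by rewrite !(dotvBl, dotvBr); ring.
Qed.

Lemma Spp_form_pep :
  Spp_form N mu L tau lnext lstar llast beta pep_vec =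
  tau * sqnorm x0 - \sum_(i < N) lstar i * gap ws (w i)
  - \sum_(i < N.-1) lnext i * gap (w i) (w i.+1) - llast * gap (w N.-1) ws.
Proof.
have star_terms : \sum_(i < N) lstar i * gap ws (w i) =
    \sum_(i < N) lstar i * B i
    - (2 * (L - mu))^-1 * \sum_(i < N) lstar i * dotv (g i) (g i).
  rewrite mulr_sumr -sumrB; apply: eq_bigr => i _.
  by rewrite gap_ws_left //; move: (2 * (L - mu)) => l; ring.
have next_terms : \sum_(i < N.-1) lnext i * gap (w i) (w i.+1) =
    \sum_(i < N.-1) lnext i * (B i.+1 - B i)
    - \sum_(i < N.-1) lnext i * dotv (g i.+1 - g i) (x i)
    - (2 * (L - mu))^-1 * \sum_(i < N.-1) lnext i * dotv (g i - g i.+1) (g i - g i.+1).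
  rewrite mulr_sumr -!sumrB; apply: eq_bigr => i _.
  rewrite gap_consecutive; last by have := ltn_ord i; lia.
  by move: (2 * (L - mu)) => l; ring.
have := lin_constraint_weighted_sum N_gt1 lin_eq0 (fun i => B i).
have := Spp_form_cross_terms.
rewrite /Spp_form star_terms next_terms gap_ws_right /sqnorm; lra.
Qed.

Lemma pep_bound : sqnorm (w N - ws) <= tau * sqnorm (w 0%N - ws).
Proof.
case: feas => lnext_ge0 [lstar_ge0 [llast_ge0 [LMI_psd _]]].
have := sqnorm_wNv_le_Spp_form pep_vec_supp LMI_psd.
have -> : gram_mx N.+1 pep_vec *m wNv N mu L beta = x N.
  rewrite gram_mx_wNv // w_method; last by apply/andP; split; lia.
  congr (_ *: _ - _).
    by congr (1 - _ * _); apply: eq_bigr => i _; rewrite alpha_last_row.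
  by apply: eq_bigr => i _; rewrite alpha_last_row g_gshift.
have gap_ge0 y z : 0 <= gap y z by apply: interp_gap_ge0.
have star_ge0 : 0 <= \sum_(i < N) lstar i * gap ws (w i).
  by apply: sumr_ge0 => i _; rewrite mulr_ge0 ?lstar_ge0.
have next_ge0 : 0 <= \sum_(i < N.-1) lnext i * gap (w i) (w i.+1).
  by apply: sumr_ge0 => i _; rewrite mulr_ge0 ?lnext_ge0 //; have := ltn_ord i; lia.
rewrite Spp_form_pep; have := mulr_ge0 llast_ge0 (gap_ge0 (w N.-1) ws); lra.
Qed.

End PerformanceEstimation.

Theorem lemma6 (R : realType) (N : nat) (mu L tau : R)
    (lnext lstar : nat -> R) (llast : R) (beta : nat -> nat -> R) :
  (1 < N)%N -> 0 <= mu -> mu < L ->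
  optimal N mu L tau lnext lstar llast beta ->
  (* (i) *)
  (forall i : nat, (i < N.-1)%N -> lnext i = 0 ->
     forall j : nat, (j < i)%N -> beta i j = 0) /\
  (* (ii) *)
  (llast = 0 -> forall j : nat, (j < N.-1)%N -> beta N.-1 j = 0) /\
  (* (iii) *)
  (forall (d : nat) (f : 'cV[R]_d -> R) (grad : 'cV[R]_d -> 'cV[R]_d)
          (ws : 'cV[R]_d) (w : nat -> 'cV[R]_d),
     in_FmuL mu L f grad ->
     is_argmin f ws ->
     (forall k : nat, (1 <= k <= N)%N ->
        w k - ws =
          (1 - mu / L * \sum_(i < k) alpha N lnext llast beta k i) *: (w 0%N - ws)
          - \sum_(i < k) (alpha N lnext llast beta k i / L) *:
              (grad (w i) - mu *: (w i - ws))) ->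
     sqnorm (w N - ws) <= tau * sqnorm (w 0%N - ws)).
Proof.
move=> N_gt1 mu_ge0 mu_lt_L [feas _].
have L_gt0 : 0 < L by apply: le_lt_trans mu_lt_L.
split; first exact: beta_row_eq0_of_lnext N_gt1 L_gt0 feas.
split; first exact: beta_row_eq0_of_llast N_gt1 L_gt0 feas.
move=> d f grad ws w f_FmuL ws_min w_method.
exact: (pep_bound N_gt1 mu_ge0 mu_lt_L feas f_FmuL ws_min w_method).
Qed.
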